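(* Let $X$ be an algebraic L-space. Then $X$ is kernel-stable (i.e., $X$ is an arithmetic L-space) if and only if $U\cap V\in{\sf ClopSUp}(X)$ for all $U,V\in{\sf ClopSUp}(X)$.
   Context: A Priestley space is a Stone space $X$ with a partial order such that clopen upsets separate points. An L-space is a Priestley space in which the downset of each clopen set is clopen and the closure of each open upset is open. ${\sf ClopUp}(X)$ is the set of clopen upsets; $\mathrm{cl}$ denotes closure. The spatial part of $X$ is $Y=\{y\in X\mid{\downarrow}y\text{ clopen}\}$. A Scott upset is a closed upset $F$ with $\min F\subseteq Y$; ${\sf ClopSUp}(X)$ is the set of clopen Scott upsets. For $U,V\in{\sf ClopUp}(X)$, $V\ll U$ means that for every open upset $W$, $U\subseteq\mathrm{cl}\,W$ implies $V\subseteq W$; $\ker U=\bigcup\{V\in{\sf ClopUp}(X)\mid V\ll U\}$; $\mathrm{core}\,U=\bigcup\{V\in{\sf ClopSUp}(X)\mid V\subseteq U\}$. $X$ is an algebraic L-space if $\mathrm{core}\,U$ is dense in $U$ for each $U\in{\sf ClopUp}(X)$; it is kernel-stable if $\ker(U\cap V)=\ker U\cap\ker V$ for all $U,V\in{\sf ClopUp}(X)$. An arithmetic L-space is a kernel-stable algebraic L-space. *)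

From mathcomp Require Import all_boot.
From mathcomp Require Import all_classical all_reals topology.
Set Implicit Arguments. Unset Strict Implicit. Unset Printing Implicit Defensive.
Local Open Scope classical_set_scope.

Section LSpaces.
Variables (T : topologicalType) (le : T -> T -> Prop).

Definition is_partial_order : Prop :=
  [/\ (forall x, le x x),
      (forall x y, le x y -> le y x -> x = y) &
      (forall x y z, le x y -> le y z -> le x z)].

Definition stone_space : Prop :=
  [/\ compact [set: T], hausdorff_space T &
      (forall (O : set T) x, open O -> O x ->
         exists C : set T, [/\ clopen C, C x & C `<=` O])].

Definition upset (A : set T) : Prop := forall x y, A x -> le x y -> A y.

Definition downset_of (A : set T) : set T := [set y | exists2 x, A x & le y x].

Definition ClopUp (U : set T) : Prop := clopen U /\ upset U.

Definition priestley_space : Prop :=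
  [/\ is_partial_order, stone_space &
      (forall x y, ~ le x y -> exists U, [/\ ClopUp U, U x & ~ U y])].

Definition L_space : Prop :=
  [/\ priestley_space,
      (forall U : set T, clopen U -> clopen (downset_of U)) &
      (forall U : set T, open U -> upset U -> open (closure U))].

Definition spatial_part : set T := [set y | clopen (downset_of [set y])].

Definition minimals (F : set T) : set T :=
  [set x | F x /\ forall y, F y -> le y x -> y = x].

Definition scott_upset (F : set T) : Prop :=
  [/\ closed F, upset F & minimals F `<=` spatial_part].

Definition ClopSUp (U : set T) : Prop := clopen U /\ scott_upset U.

Definition way_below (V U : set T) : Prop :=
  forall W : set T, open W -> upset W -> U `<=` closure W -> V `<=` W.

Definition ker (U : set T) : set T :=
  [set x | exists2 V : set T, ClopUp V /\ way_below V U & V x].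

Definition core (U : set T) : set T :=
  [set x | exists2 V : set T, ClopSUp V /\ V `<=` U & V x].

Definition algebraic_L_space : Prop :=
  L_space /\ (forall U, ClopUp U -> U `<=` closure (core U)).

Definition kernel_stable : Prop :=
  forall U V, ClopUp U -> ClopUp V -> ker (U `&` V) = ker U `&` ker V.

Definition arithmetic_L_space : Prop := algebraic_L_space /\ kernel_stable.

End LSpaces.

(* In a Priestley space every point of a closed set lies above a minimal point
   of it (Zorn's lemma, chains having lower bounds by compactness).  Hence a
   clopen Scott upset S satisfies S << S: a minimal point of S is spatial, so
   its downset is an open neighbourhood meeting every W with S in cl W.  In an
   algebraic L-space this gives ker U = core U for every clopen upset U, and a
   clopen upset is Scott exactly when it lies in its own core.  Both kernel
   stability and closure of ClopSUp under binary meets then say that core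
   commutes with binary intersections. *)
From mathcomp Require Import all_boot.
From mathcomp Require Import all_classical all_reals topology.
Set Implicit Arguments. Unset Strict Implicit. Unset Printing Implicit Defensive.
Local Open Scope classical_set_scope.

Lemma compact_finI_bigcap (T : topologicalType) (I : choiceType) (D : set I)
    (f : I -> set T) :
  compact [set: T] -> (forall i, D i -> closed (f i)) -> finI D f ->
  D !=set0 -> \bigcap_(i in D) f i !=set0.
Proof.
move=> Tcompact fclosed finIf [i Di].
have [|p [_ p_cluster]] := Tcompact _ (finI_filter finIf).
  by exists (f i); [apply: finI_from1|].
exists p => j Dj; apply: fclosed => // B.
by apply: p_cluster; exists (f j); [apply: finI_from1|].
Qed.

Lemma total_on_seq_lower_bound (T : eqType) (R : T -> T -> Prop) (D : set T) :
  (forall t, R t t) -> (forall r s t, R r s -> R s t -> R r t) ->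
  total_on D R -> D !=set0 ->
  forall s : seq T, (forall t, t \in s -> D t) ->
  exists2 m, D m & forall t, t \in s -> R m t.
Proof.
move=> Rrefl Rtrans Dtot [d Dd]; elim=> [|t s IHs] sD; first by exists d.
have [u tsu|m Dm ms] := IHs; first by apply: sD; rewrite inE tsu orbT.
have Dt : D t by apply: sD; rewrite inE eqxx.
have [mt|tm] := Dtot _ _ Dm Dt.
  by exists m => // u; rewrite inE => /orP[/eqP->|/ms].
exists t => // u; rewrite inE => /orP[/eqP->//|/ms]; exact: Rtrans.
Qed.

Section PriestleySpace.
Variables (T : topologicalType) (le : T -> T -> Prop).
Hypothesis PS : priestley_space le.

Lemma closed_le_downset (t : T) : closed [set y | le y t].
Proof.
have [_ _ separation] := PS.
rewrite -[X in closed X]setCK; apply: open_closedC.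
rewrite openE => y /= nyt; have [U [[[oU _] uU] Uy nUt]] := separation _ _ nyt.
apply: (@filterS _ _ _ U); last exact: open_nbhs_nbhs.
by move=> z Uz lzt; apply: nUt; apply: uU lzt.
Qed.

Lemma closed_chain_lower_bound (F A : set T) (x : T) : closed F -> F x ->
  A `<=` F `&` [set y | le y x] -> total_on A le ->
  exists m, [/\ F m, le m x & forall a, A a -> le m a].
Proof.
move=> cF Fx AFx Atot; have [[le_refl _ le_trans] [Tcompact _ _] _] := PS.
have DF : x |` A `<=` F by move=> t [->|/AFx[]].
have Dtot : total_on (x |` A) le.
  move=> s t [->|As] [->|At]; [left|right|left|exact: Atot].
  - exact: le_refl.
  - by have [] := AFx _ At.
  - by have [] := AFx _ As.
have [m Dm] : \bigcap_(t in x |` A) (F `&` [set y | le y t]) !=set0.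
  apply: compact_finI_bigcap => //; last by exists x; left.
    by move=> t _; apply: closedI => //; apply: closed_le_downset.
  move=> D' D'D.
  have [|m Dm mD'] := total_on_seq_lower_bound le_refl le_trans Dtot _
    (s := finmap.enum_fset D') (fun u uD => set_mem (D'D u uD)).
    by exists x; left.
  by exists m => t /= tD'; split; [exact: DF|exact: mD'].
have [Fm mx] := Dm x (or_introl erefl).
by exists m; split => // a Aa; have [] := Dm a (or_intror Aa).
Qed.

Lemma exists_minimal_below (F : set T) (x : T) : closed F -> F x ->
  exists2 m, minimals le F m & le m x.
Proof.
move=> cF Fx; have [[le_refl le_anti le_trans] _ _] := PS.
pose B := {y : T | F y /\ le y x}.
pose R (a b : B) := `[< le (sval b) (sval a) >].
have [||||[m [Fm mx]] m_max] := @Zorn B R.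
- by move=> a; apply/asboolP.
- by move=> a b c /asboolP ab /asboolP bc; apply/asboolP; apply: le_trans ab.
- by move=> [a ?] [b ?] /asboolP ba /asboolP ab; apply: eq_exist; apply: le_anti.
- move=> A Atot.
  have [||m [Fm mx mA]] := closed_chain_lower_bound cF Fx (A := sval @` A).
  + by move=> _ [a _ <-]; case: (svalP a).
  + move=> _ _ [a Aa <-] [b Ab <-].
    by have [/asboolP|/asboolP] := Atot _ _ Aa Ab; [right|left].
  by exists (exist _ m (conj Fm mx)) => a Aa; apply/asboolP; apply: mA.
exists m => //; split => // y Fy ym.
have yx : le y x by apply: le_trans ym mx.
have /m_max/(congr1 sval) // : R (exist _ m (conj Fm mx)) (exist _ y (conj Fy yx)).
exact/asboolP.
Qed.

Lemma ClopSUp_way_below_refl (S : set T) : ClopSUp le S -> way_below le S S.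
Proof.
move=> [[_ cS] [_ uS minS_spatial]] W oW uW S_clW x Sx.
have [m minSm mx] := exists_minimal_below cS Sx.
have [oDm _] : spatial_part le m by apply: minS_spatial.
have [w [Ww [_ -> wm]]] : W `&` downset_of le [set m] !=set0.
  apply: (S_clW _ minSm.1); apply: open_nbhs_nbhs; split => //.
  by exists m => //; have [[]] := PS.
exact: uW (uW _ _ Ww wm) mx.
Qed.

End PriestleySpace.

Section CoreKernel.
Variables (T : topologicalType) (le : T -> T -> Prop).

Lemma way_belowSS (A B A' B' : set T) : A' `<=` A -> B `<=` B' ->
  way_below le A B -> way_below le A' B'.
Proof.
move=> A'A BB' AB W oW uW B'W; apply: subset_trans A'A _.
by apply: AB => //; apply: subset_trans BB' B'W.
Qed.

Lemma ClopSUp_ClopUp (S : set T) : ClopSUp le S -> ClopUp le S.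
Proof. by move=> [cS [_ uS _]]. Qed.

Lemma ClopUpI (U V : set T) : ClopUp le U -> ClopUp le V -> ClopUp le (U `&` V).
Proof.
move=> [cU uU] [cV uV]; split; first exact: clopenI.
by move=> x y [Ux Vx] xy; split; [apply: uU xy|apply: uV xy].
Qed.

Lemma coreS (U V : set T) : U `<=` V -> core le U `<=` core le V.
Proof. by move=> UV x [S [SS SU] Sx]; exists S => //; split=> //; apply: subset_trans UV. Qed.

Lemma open_core (U : set T) : open (core le U).
Proof.
rewrite openE => x [S [SS SU] Sx].
apply: (@filterS _ _ _ S); first by move=> y Sy; exists S.
by apply: open_nbhs_nbhs; split => //; exact: SS.1.1.
Qed.

Lemma upset_core (U : set T) : upset le (core le U).
Proof.
move=> x y [S [SS SU] Sx] xy; exists S => //.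
by case: SS => _ [_ uS _]; apply: uS xy.
Qed.

Lemma ClopSUpE (U : set T) : ClopUp le U -> ClopSUp le U <-> U `<=` core le U.
Proof.
move=> [cU uU]; split=> [SU x Ux|Ucore]; first by exists U; first split.
split=> //; split=> [||m [Um m_min]] //; first by case: cU.
have [S [[_ [_ _ minS_spatial]] SU] Sm] := Ucore m Um.
by apply: minS_spatial; split => // y Sy ym; apply: m_min => //; apply: SU.
Qed.

Lemma ker_eq_core (U : set T) : algebraic_L_space le -> ClopUp le U ->
  ker le U = core le U.
Proof.
move=> [[PS _ _] core_dense] UU; apply/seteqP; split.
  move=> x [V [_ VU] Vx]; apply: (VU _ _ _ (core_dense _ UU)) => //.
    exact: open_core.
  exact: upset_core.
move=> x [S [SS SU] Sx]; exists S => //; split; first exact: ClopSUp_ClopUp.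
exact: way_belowSS (@subset_refl _ S) SU (ClopSUp_way_below_refl PS SS).
Qed.

End CoreKernel.

Theorem lemma5p2 (T : topologicalType) (le : T -> T -> Prop) :
  algebraic_L_space le ->
  (kernel_stable le <->
   (forall U V : set T, ClopSUp le U -> ClopSUp le V -> ClopSUp le (U `&` V))).
Proof.
move=> AL; split=> [ker_stable U V SU SV | ClopSUpI U V UU UV].
- have [UU UV] := (ClopSUp_ClopUp SU, ClopSUp_ClopUp SV).
  have UVU := ClopUpI UU UV.
  apply/(ClopSUpE UVU); rewrite -ker_eq_core // ker_stable // !ker_eq_core //.
  by apply: setISS; apply/ClopSUpE.
- rewrite !ker_eq_core //; last exact: ClopUpI.
  apply/seteqP; split; first by rewrite subsetI; split; apply: coreS.
  move=> x [[S1 [S1S S1U] S1x] [S2 [S2S S2V] S2x]].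
  by exists (S1 `&` S2) => //; split; [exact: ClopSUpI|exact: setISS].
Qed.
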